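(* Let $M$ be a message set such that $G_M$ is an oriented ring. For any $M$-system $S$, $S$ is $1$-synchronizable if and only if it is synchronizable.
   Context: A message set $M=(\Sigma_M,N,\mathrm{src},\mathrm{dst})$: finite set of messages, $N\ge1$ peers, $\mathrm{src}(a)\neq\mathrm{dst}(a)\in\{1,\dots,N\}$. Its communication topology $G_M$ is the directed graph on $\{1,\dots,N\}$ with an edge $i\to j$ iff some message $a$ has $\mathrm{src}(a)=i$, $\mathrm{dst}(a)=j$; $G_M$ is an oriented ring if its edge set is exactly $\{(i,j)\mid j=i+1 \bmod N\}$. Actions $!a$ (by peer $\mathrm{src}(a)$), $?a$ (by peer $\mathrm{dst}(a)$); traces are finite action sequences; $!?a$ abbreviates $!a\cdot?a$. For a trace $\tau$, $\pi_!(\tau)$ is the sequence of sent messages; $\mathrm{buf}_{i\to j}(\tau)$ is the word $w$ (if any) with (sent on $i\to j$) $=$ (received on $i\to j$)$\cdot w$. $\tau$ is FIFO ($k$-bounded FIFO) if for all $i,j$ and prefixes $\tau'$, $\mathrm{buf}_{i\to j}(\tau')$ is defined (and has length $\le k$); synchronous if of the form $!?a_1\cdots!?a_k$. An $M$-system $S=(P_1,\dots,P_N)$: finite automata $P_i$ (all states accepting) over actions of peer $i$, with one FIFO channel per ordered pair $i\neq j$. A configuration: one control state per peer and contents $w_{i,j}$ of channels; stable if all channels empty. $!a$ ($\mathrm{src}(a)=i,\mathrm{dst}(a)=j$) moves $P_i$ and appends $a$ to $w_{i,j}$; $?a$ moves $P_j$ and removes $a$ from the head of $w_{i,j}$; $c_0$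 is the initial configuration. $T_k(S)$ ($k\ge1$): $k$-bounded FIFO traces $\tau$ with $c_0\xrightarrow{\tau}c$ for some $c$; $T_0(S)$: synchronous such traces; $T_\omega(S)=\bigcup_kT_k(S)$. $ST_k(S)=\{\pi_!(\tau)\mid\tau\in T_k(S)\}\cup\{(\pi_!(\tau),c)\mid c_0\xrightarrow{\tau}c,\ c\text{ stable},\ \tau\in T_k(S)\}$. $S$ is synchronizable if $ST_0(S)=ST_\omega(S)$ and $1$-synchronizable if $ST_0(S)=ST_1(S)$. *)

From mathcomp Require Import all_boot.
Set Implicit Arguments. Unset Strict Implicit. Unset Printing Implicit Defensive.

(* Communicating FIFO systems, following the paper's definitions.
   Peers are 'I_N (i.e. {0,...,N-1} instead of {1,...,N}). *)

Inductive action (Sigma : Type) : Type :=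
| Send of Sigma
| Recv of Sigma.
Arguments Send {Sigma} _.
Arguments Recv {Sigma} _.

Section Systems.
Variables (Sigma : finType) (N : nat) (src dst : Sigma -> 'I_N).

Definition oriented_ring : Prop :=
  forall i j : 'I_N,
    (exists a : Sigma, src a = i /\ dst a = j) <-> (val j = (val i + 1) %% N).

(* An M-system: one finite automaton per peer (all states accepting).
   W.l.o.g. all automata share one finite state type Q; the automaton of
   peer i is (q0 i, delta i); only transitions of delta i on actions of
   peer i are ever used (Send a with src a = i, Recv a with dst a = i). *)
Record system (Q : finType) := System {
  q0 : 'I_N -> Q;
  delta : 'I_N -> Q -> action Sigma -> Q -> bool }.

Variable Q : finType.
Variable S : system Q.

Definition config := ({ffun 'I_N -> Q} * {ffun 'I_N * 'I_N -> seq Sigma})%type.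

Definition c0 : config := ([ffun i => q0 S i], [ffun _ => [::]]).

Definition stable (c : config) : Prop := forall i j : 'I_N, i != j -> c.2 (i, j) = [::].

Definition upd_state (c : config) (i : 'I_N) (q : Q) : {ffun 'I_N -> Q} :=
  [ffun k => if k == i then q else c.1 k].
Definition upd_chan (c : config) (p : 'I_N * 'I_N) (w : seq Sigma)
  : {ffun 'I_N * 'I_N -> seq Sigma} :=
  [ffun k => if k == p then w else c.2 k].

Inductive step : config -> action Sigma -> config -> Prop :=
| step_send (c : config) (a : Sigma) (q' : Q) :
    delta S (src a) (c.1 (src a)) (Send a) q' ->
    step c (Send a) (upd_state c (src a) q',
                     upd_chan c (src a, dst a) (rcons (c.2 (src a, dst a)) a))
| step_recv (c : config) (a : Sigma) (q' : Q) (w : seq Sigma) :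
    c.2 (src a, dst a) = a :: w ->
    delta S (dst a) (c.1 (dst a)) (Recv a) q' ->
    step c (Recv a) (upd_state c (dst a) q', upd_chan c (src a, dst a) w).

Inductive reach : config -> seq (action Sigma) -> config -> Prop :=
| reach_nil (c : config) : reach c [::] c
| reach_cons (c c1 c2 : config) (x : action Sigma) (t : seq (action Sigma)) :
    step c x c1 -> reach c1 t c2 -> reach c (x :: t) c2.

Definition sent_of (x : action Sigma) : option Sigma :=
  if x is Send a then Some a else None.
Definition recv_of (x : action Sigma) : option Sigma :=
  if x is Recv a then Some a else None.

Definition sends (t : seq (action Sigma)) : seq Sigma := pmap sent_of t.

Definition on_chan (i j : 'I_N) (a : Sigma) : bool := (src a == i) && (dst a == j).

Definition sent_on (i j : 'I_N) (t : seq (action Sigma)) : seq Sigma :=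
  filter (on_chan i j) (pmap sent_of t).
Definition recv_on (i j : 'I_N) (t : seq (action Sigma)) : seq Sigma :=
  filter (on_chan i j) (pmap recv_of t).

Definition buf (i j : 'I_N) (t : seq (action Sigma)) : option (seq Sigma) :=
  if prefix (recv_on i j t) (sent_on i j t)
  then Some (drop (size (recv_on i j t)) (sent_on i j t)) else None.

Definition fifo_trace (t : seq (action Sigma)) : Prop :=
  forall (n : nat) (i j : 'I_N), buf i j (take n t) != None.

Definition kbounded_fifo_trace (k : nat) (t : seq (action Sigma)) : Prop :=
  forall (n : nat) (i j : 'I_N),
    exists2 w, buf i j (take n t) = Some w & size w <= k.

Definition synchronous_trace (t : seq (action Sigma)) : Prop :=
  exists s : seq Sigma, t = flatten [seq [:: Send a; Recv a] | a <- s].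

Definition T (k : nat) (t : seq (action Sigma)) : Prop :=
  (if k is 0 then synchronous_trace t else kbounded_fifo_trace k t) /\
  exists c, reach c0 t c.

Definition T_omega (t : seq (action Sigma)) : Prop := exists k, T k t.

Inductive st_elt : Type :=
| STseq of seq Sigma
| STpair of seq Sigma & config.

Definition ST_of (Tk : seq (action Sigma) -> Prop) (o : st_elt) : Prop :=
  match o with
  | STseq u => exists t, Tk t /\ sends t = u
  | STpair u c => exists t, Tk t /\ sends t = u /\ reach c0 t c /\ stable c
  end.

Definition ST (k : nat) := ST_of (T k).
Definition ST_omega := ST_of T_omega.

Definition synchronizable : Prop := forall o, ST 0 o <-> ST_omega o.
Definition one_synchronizable : Prop := forall o, ST 0 o <-> ST 1 o.

End Systems.

From mathcomp Require Import all_boot.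
Set Implicit Arguments. Unset Strict Implicit. Unset Printing Implicit Defensive.

(* Since ST_0 <= ST_1 <= ST_omega always holds, the point is to derive ST_omega <= ST_0
   from ST_1 <= ST_0.  By induction on the length of a reachable FIFO execution t we show
   that the send sequence u of t is synchronously executable and that every peer j sits in
   a state reached by its projection of u in which only the first r receptions are kept,
   r being the number of receptions j has actually performed.  Each new action is justified
   by a 1-bounded test execution: the synchronous run of u in which at most one message,
   addressed to the acting peer, is left pending; 1-synchronizability turns it back into
   a synchronous run.  The induction hypothesis is applied to shorter executions obtained by
   cutting out the sender of a never-received message from that message on: on a ring
   only its successor could notice, and that successor never receives the cut messages. *)

Section Executions.
Variables (Sigma : finType) (N : nat) (src dst : Sigma -> 'I_N).
Hypothesis src_neq_dst : forall a : Sigma, src a != dst a.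
Variables (Q : finType) (S : system Sigma N Q).

Local Notation act := (action Sigma).
Local Notation cfg := (config Sigma N Q).
Local Notation step := (step src dst S).
Local Notation reach := (reach src dst S).
Local Notation c0 := (c0 S).

Lemma reach_cat c t1 t2 c' :
  reach c (t1 ++ t2) c' <-> exists2 cm, reach c t1 cm & reach cm t2 c'.
Proof.
elim: t1 c => [|x t1 IH] c /=.
  by split=> [|[cm Hcm]]; [exists c => //; constructor | inversion Hcm; subst].
split=> [Hr | [cm Hcm Hr]].
  inversion Hr as [|? c1 ? ? ? Hs Hr1]; subst; have [cm H1 H2] := (IH c1).1 Hr1.
  by exists cm => //; econstructor; eauto.
inversion Hcm as [|? c1 ? ? ? Hs Hr1]; subst; econstructor; first eassumption.
by apply/(IH c1).2; exists cm.
Qed.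

Lemma reach_rcons c t x c' :
  reach c (rcons t x) c' <-> exists2 cm, reach c t cm & step cm x c'.
Proof.
rewrite -cats1; split=> [/reach_cat [cm H1 H2] | [cm H1 H2]].
  by exists cm => //; inversion H2 as [|? ? ? ? ? Hs Hr]; subst; inversion Hr; subst.
by apply/reach_cat; exists cm => //; econstructor; eauto; constructor.
Qed.

Lemma on_chanE i j a : on_chan src dst i j a = ((i, j) == (src a, dst a)).
Proof. by rewrite /on_chan xpair_eqE eq_sym [dst a == j]eq_sym. Qed.

Lemma sent_on_reach t c : reach c0 t c ->
  forall i j, sent_on src dst i j t = recv_on src dst i j t ++ c.2 (i, j).
Proof.
elim/last_ind: t c => [|t x IH] c.
  by move=> H; inversion H; subst => i j /=; rewrite ffunE.
case/reach_rcons=> cm /IH {}IH Hs i j.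
move: (IH i j); rewrite /sent_on /recv_on -!cats1 !pmap_cat !filter_cat => ->.
inversion Hs; subst => /=; rewrite ffunE on_chanE; case: eqP => [[-> ->]|_].
- by rewrite cats0 -catA cats1.
- by rewrite !cats0.
- by rewrite cats0 H -catA.
- by rewrite !cats0.
Qed.

Lemma buf_reach t c : reach c0 t c -> forall i j, buf src dst i j t = Some (c.2 (i, j)).
Proof.
by move=> H i j; rewrite /buf (sent_on_reach H i j) prefix_prefix drop_size_cat.
Qed.

Lemma reach_self_chan t c : reach c0 t c -> forall i, c.2 (i, i) = [::].
Proof.
move=> H i; have := sent_on_reach H i i.
have no_self s : filter (on_chan src dst i i) s = [::].
  elim: s => //= a s ->; rewrite /on_chan; case: eqP => //= <-.
  by rewrite eq_sym (negbTE (src_neq_dst a)).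
by rewrite /sent_on /recv_on !no_self => /= <-.
Qed.

(** * Synchronous and 1-bounded executions *)

Definition bounded1 (c : cfg) := forall i j, size (c.2 (i, j)) <= 1.

Inductive reach1 : cfg -> seq act -> cfg -> Prop :=
| reach1_nil c : bounded1 c -> reach1 c [::] c
| reach1_cons c c1 c2 x t :
    bounded1 c -> step c x c1 -> reach1 c1 t c2 -> reach1 c (x :: t) c2.

Lemma reach1_reach c t c' : reach1 c t c' -> reach c t c'.
Proof. by elim=> {c t c'} [c _|c c1 c2 x t _ Hs _ IH]; econstructor; eauto. Qed.

Lemma reach1_bounded c t c' : reach1 c t c' -> bounded1 c /\ bounded1 c'.
Proof. by elim=> // ? ? ? ? ? Hb _ _ []. Qed.

Lemma reach1_cat c t1 t2 c' :
  reach1 c (t1 ++ t2) c' <-> exists2 cm, reach1 c t1 cm & reach1 cm t2 c'.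
Proof.
elim: t1 c => [|x t1 IH] c /=.
  split=> [H | [cm Hcm]]; last by inversion Hcm; subst.
  by exists c => //; constructor; case: (reach1_bounded H).
split=> [Hr | [cm Hcm Hr]].
  inversion Hr as [|? c1 ? ? ? Hb Hs Hr1]; subst; have [cm H1 H2] := (IH c1).1 Hr1.
  by exists cm => //; econstructor; eauto.
inversion Hcm as [|? c1 ? ? ? Hb Hs Hr1]; subst; econstructor; [eassumption..|].
by apply/(IH c1).2; exists cm.
Qed.

Lemma reach1_rcons_send c t x a x' : reach1 c t x -> step x (Send a) x' ->
  x.2 (src a, dst a) = [::] -> reach1 c (rcons t (Send a)) x'.
Proof.
move=> H Hs Hx; have [_ Hb] := reach1_bounded H.
rewrite -cats1; apply/reach1_cat; exists x => //; apply: (reach1_cons Hb Hs (reach1_nil _)).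
inversion Hs; subst => i j; rewrite /= ffunE; case: eqP => _; [by rewrite Hx | exact: Hb].
Qed.

Lemma reach1_rcons_recv c t x a x' : reach1 c t x -> step x (Recv a) x' ->
  reach1 c (rcons t (Recv a)) x'.
Proof.
move=> H Hs; have [_ Hb] := reach1_bounded H.
rewrite -cats1; apply/reach1_cat; exists x => //; apply: (reach1_cons Hb Hs (reach1_nil _)).
inversion Hs as [|? ? q w Hw]; subst => i j; rewrite /= ffunE; case: eqP => [_|_]; last exact: Hb.
by apply: leq_trans (Hb (src a) (dst a)); rewrite Hw.
Qed.

Lemma reach1_T1 t c : reach1 c0 t c -> T src dst S 1 t.
Proof.
move=> H; split; last by exists c; apply: reach1_reach.
move=> n i j.
have /reach1_cat [cm Hn _] : reach1 c0 (take n t ++ drop n t) c by rewrite cat_take_drop.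
exists (cm.2 (i, j)); first exact: buf_reach (reach1_reach Hn) i j.
by case: (reach1_bounded Hn).
Qed.

Inductive lrun (k : 'I_N) : Q -> seq act -> Q -> Prop :=
| lrun_nil q : lrun k q [::] q
| lrun_cons q q1 q2 x w : delta S k q x q1 -> lrun k q1 w q2 -> lrun k q (x :: w) q2.

Lemma lrun_cat k q w1 w2 q' :
  lrun k q (w1 ++ w2) q' <-> exists2 qm, lrun k q w1 qm & lrun k qm w2 q'.
Proof.
elim: w1 q => [|x w1 IH] q /=.
  by split=> [|[qm Hqm]]; [exists q => //; constructor | inversion Hqm; subst].
split=> [Hr | [qm Hqm Hr]].
  inversion Hr as [|? q1 ? ? ? Hd Hr1]; subst; have [qm H1 H2] := (IH q1).1 Hr1.
  by exists qm => //; econstructor; eauto.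
inversion Hqm as [|? q1 ? ? ? Hd Hr1]; subst; econstructor; first eassumption.
by apply/(IH q1).2; exists qm.
Qed.

Lemma lrun_nilE k q q' : lrun k q [::] q' -> q' = q.
Proof. by inversion 1. Qed.

Lemma lrun_consE k q x w q' :
  lrun k q (x :: w) q' -> exists2 q1, delta S k q x q1 & lrun k q1 w q'.
Proof. by inversion 1; subst; eauto. Qed.

Definition proj_msg (k : 'I_N) (a : Sigma) : seq act :=
  if src a == k then [:: Send a] else if dst a == k then [:: Recv a] else [::].

Definition proj (k : 'I_N) (u : seq Sigma) : seq act := flatten (map (proj_msg k) u).

Lemma proj_cat k u1 u2 : proj k (u1 ++ u2) = proj k u1 ++ proj k u2.
Proof. by rewrite /proj map_cat flatten_cat. Qed.

Lemma proj_cons k a u : proj k (a :: u) = proj_msg k a ++ proj k u.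
Proof. by []. Qed.

Lemma proj_msg_src a : proj_msg (src a) a = [:: Send a].
Proof. by rewrite /proj_msg eqxx. Qed.

Lemma proj_msg_dst a : proj_msg (dst a) a = [:: Recv a].
Proof. by rewrite /proj_msg (negbTE (src_neq_dst a)) eqxx. Qed.

Lemma proj_msg_other k a : k != src a -> k != dst a -> proj_msg k a = [::].
Proof. by rewrite /proj_msg ![_ == k]eq_sym => /negbTE -> /negbTE ->. Qed.

Definition sync_trace (u : seq Sigma) : seq act := flatten [seq [:: Send a; Recv a] | a <- u].

Lemma sends_cat (t1 t2 : seq act) : sends (t1 ++ t2) = sends t1 ++ sends t2.
Proof. by rewrite /sends pmap_cat. Qed.

Lemma sends_rcons (t : seq act) x : sends (rcons t x) = sends t ++ sends [:: x].
Proof. by rewrite -cats1 sends_cat. Qed.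

Lemma sends_sync_trace u : sends (sync_trace u) = u.
Proof. by elim: u => //= a u; rewrite /sends /= => ->. Qed.

Lemma synchronous_traceE t : synchronous_trace t -> t = sync_trace (sends t).
Proof. by case=> u ->; rewrite -/(sync_trace u) sends_sync_trace. Qed.

Definition exchange (x : cfg) (a : Sigma) (q1 q2 : Q) : cfg :=
  ([ffun k => if k == dst a then q2 else if k == src a then q1 else x.1 k], x.2).

Lemma reach1_exchange x a q1 q2 : bounded1 x -> x.2 (src a, dst a) = [::] ->
  delta S (src a) (x.1 (src a)) (Send a) q1 -> delta S (dst a) (x.1 (dst a)) (Recv a) q2 ->
  reach1 x [:: Send a; Recv a] (exchange x a q1 q2).
Proof.
move=> Hb Hx Hd1 Hd2.
set x1 : cfg := (upd_state x (src a) q1, upd_chan x (src a, dst a) (rcons (x.2 (src a, dst a)) a)).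
have Hx1 : x1.2 (src a, dst a) = [:: a] by rewrite /= ffunE eqxx Hx.
have -> : exchange x a q1 q2 = (upd_state x1 (dst a) q2, upd_chan x1 (src a, dst a) [::]).
  congr pair; apply/ffunP => k; rewrite !ffunE //.
  by case: eqP => [->|_] //; rewrite -Hx.
apply: (reach1_cons Hb (step_send dst Hd1)).
have Hs2 : step x1 (Recv a) (upd_state x1 (dst a) q2, upd_chan x1 (src a, dst a) [::]).
  by apply: step_recv Hx1 _; rewrite /= ffunE eq_sym (negbTE (src_neq_dst a)).
apply: reach1_cons _ Hs2 (reach1_nil _).
  by move=> i j; rewrite /= ffunE; case: eqP => _; [rewrite Hx | exact: Hb].
by move=> i j; rewrite /= !ffunE; case: eqP => // _; exact: Hb.
Qed.

Lemma reach_exchangeE (x : cfg) a y :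
  x.2 (src a, dst a) = [::] -> reach x [:: Send a; Recv a] y ->
  exists q1 q2, [/\ delta S (src a) (x.1 (src a)) (Send a) q1,
                    delta S (dst a) (x.1 (dst a)) (Recv a) q2 & y = exchange x a q1 q2].
Proof.
move=> Hx H; inversion H as [|? x1 ? ? ? Hs1 H1]; subst.
inversion H1 as [|? x2 ? ? ? Hs2 H2]; subst; inversion H2; subst.
inversion Hs1 as [? ? q1 Hd1|]; subst; inversion Hs2 as [|? ? q2 w Hw Hd2]; subst.
move: Hw Hd2; rewrite /= !ffunE eqxx Hx eq_sym (negbTE (src_neq_dst a)) => -[<-] Hd2.
exists q1, q2; split=> //; congr pair; apply/ffunP => k; rewrite !ffunE //.
by case: eqP => [->|_] //; rewrite Hx.
Qed.

Lemma reach1_sync_trace u (x : cfg) (h : 'I_N -> Q) : bounded1 x ->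
  (forall a, a \in u -> x.2 (src a, dst a) = [::]) ->
  (forall k, lrun k (x.1 k) (proj k u) (h k)) ->
  reach1 x (sync_trace u) ([ffun k => h k], x.2).
Proof.
elim: u x => [|a u IH] x Hb Hch Hr /=.
  suff -> : ([ffun k => h k], x.2) = x by constructor.
  case: x Hb Hch Hr => f ch _ _ Hr; congr pair; apply/ffunP => k.
  by rewrite ffunE (lrun_nilE (Hr k)).
have := Hr (src a); rewrite proj_cons proj_msg_src => /lrun_consE [q1 Hd1 Hr1].
have := Hr (dst a); rewrite proj_cons proj_msg_dst => /lrun_consE [q2 Hd2 Hr2].
have Hx : x.2 (src a, dst a) = [::] by apply: Hch; rewrite mem_head.
apply/reach1_cat; exists (exchange x a q1 q2); first exact: reach1_exchange.
apply: IH => // [b Hbu|k]; first by apply: Hch; rewrite inE Hbu orbT.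
rewrite /exchange /= ffunE; case: eqP => [-> //|/eqP Hkd]; case: eqP => [-> //|/eqP Hks].
by have := Hr k; rewrite proj_cons proj_msg_other.
Qed.

Lemma reach_sync_trace_lrun u c :
  reach c0 (sync_trace u) c -> forall k, lrun k (q0 S k) (proj k u) (c.1 k).
Proof.
have gen (x : cfg) : (forall p, x.2 p = [::]) -> reach x (sync_trace u) c ->
    forall k, lrun k (x.1 k) (proj k u) (c.1 k).
  elim: u x => [|a u IH] x Hx; first by move=> H k; inversion H; constructor.
  move=> /reach_cat [xm /(reach_exchangeE (Hx _)) [q1 [q2 [Hd1 Hd2 ->]]] Hr] k.
  have := IH (exchange x a q1 q2) Hx Hr k; rewrite proj_cons /exchange /= ffunE.
  case: eqP => [->|/eqP Hkd]; first by rewrite proj_msg_dst => /(lrun_cons Hd2).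
  case: eqP => [->|/eqP Hks]; first by rewrite proj_msg_src => /(lrun_cons Hd1).
  by rewrite proj_msg_other.
by move=> H k; have := gen c0 (fun p => ffunE _ _) H k; rewrite ffunE.
Qed.

Lemma reach1_sync_trace_c0 u (h : 'I_N -> Q) :
  (forall k, lrun k (q0 S k) (proj k u) (h k)) ->
  reach1 c0 (sync_trace u) ([ffun k => h k], c0.2).
Proof. by move=> H; apply: reach1_sync_trace => [i j|a _|k]; rewrite ffunE //; apply: H. Qed.

Lemma ST_of_mono (T1 T2 : seq act -> Prop) : (forall t, T1 t -> T2 t) ->
  forall o, ST_of src dst S T1 o -> ST_of src dst S T2 o.
Proof. by move=> H [u|u c] [t [/H Ht E]]; exists t. Qed.

Lemma T0_T1 t : T src dst S 0 t -> T src dst S 1 t.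
Proof.
case=> /synchronous_traceE -> [c /reach_sync_trace_lrun H].
exact: reach1_T1 (reach1_sync_trace_c0 H).
Qed.

Definition pending_cfg (d : Sigma) (q : Q) (h : 'I_N -> Q) : cfg :=
  ([ffun k => if k == dst d then q else h k],
   [ffun p => if p == (src d, dst d) then [:: d] else [::]]).

Lemma reach1_pending v1 d v2 (h : 'I_N -> Q) q :
  (forall k, lrun k (q0 S k) (proj k (v1 ++ d :: v2)) (h k)) ->
  (forall m, m \in v2 -> dst m != dst d) ->
  lrun (dst d) (q0 S (dst d)) (proj (dst d) (v1 ++ v2)) q ->
  reach1 c0 (sync_trace v1 ++ Send d :: sync_trace v2) (pending_cfg d q h).
Proof.
move=> Hh Hv2; rewrite proj_cat => /lrun_cat [qm Hq1 Hq2].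
have /fin_all_exists [mid Hmid] : forall k, exists m,
    lrun k (q0 S k) (proj k v1) m /\ lrun k m (proj k (d :: v2)) (h k).
  by move=> k; have := Hh k; rewrite proj_cat => /lrun_cat [m]; exists m.
pose x1 : cfg := ([ffun k => if k == dst d then qm else mid k], c0.2).
have H1 : reach1 c0 (sync_trace v1) x1.
  by apply: reach1_sync_trace_c0 => k; case: eqP => [->|_] //; case: (Hmid k).
have [q1 Hd1 Hr1] : exists2 q1, delta S (src d) (mid (src d)) (Send d) q1 &
    lrun (src d) q1 (proj (src d) v2) (h (src d)).
  by apply: lrun_consE; case: (Hmid (src d)); rewrite proj_cons proj_msg_src.
pose x2 : cfg := (upd_state x1 (src d) q1,
  upd_chan x1 (src d, dst d) (rcons (x1.2 (src d, dst d)) d)).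
have Hs2 : step x1 (Send d) x2 by apply: step_send; rewrite ffunE (negbTE (src_neq_dst d)).
have -> : pending_cfg d q h = ([ffun k => if k == dst d then q else h k], x2.2).
  by congr pair; apply/ffunP => p; rewrite !ffunE.
apply/reach1_cat; exists x1 => //; apply: reach1_cons Hs2 _; first by case: (reach1_bounded H1).
apply: reach1_sync_trace => [i j|m /Hv2 Hm|k]; rewrite /= !ffunE.
- by case: eqP.
- by case: eqP => [[_ E]|_] //; rewrite E eqxx in Hm.
case: eqP => [->|/eqP Hks]; first by rewrite (negbTE (src_neq_dst d)).
case: eqP => [->|/eqP Hkd] //.
by case: (Hmid k); rewrite proj_cons proj_msg_other.
Qed.

Definition sync_feasible (u : seq Sigma) := forall k, exists q, lrun k (q0 S k) (proj k u) q.

Lemma ST0_seqP u : ST src dst S 0 (STseq N Q u) <-> sync_feasible u.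
Proof.
split=> [[t [[/synchronous_traceE Et [c Hc]] <-]] k | /fin_all_exists [h Hh]].
  by exists (c.1 k); move: Hc; rewrite {1}Et => /reach_sync_trace_lrun.
exists (sync_trace u); split; last exact: sends_sync_trace.
split; first by exists u.
by exists ([ffun k => h k], c0.2); apply: reach1_reach (reach1_sync_trace_c0 Hh).
Qed.

Lemma ST0_pair_lrun u c : ST src dst S 0 (STpair u c) ->
  forall k, lrun k (q0 S k) (proj k u) (c.1 k).
Proof.
by case=> t [[/synchronous_traceE Et _] [<- [+ _]]]; rewrite {1}Et => /reach_sync_trace_lrun.
Qed.

Lemma lrun_ST0_pair t u c : reach c0 t c -> stable c ->
  (forall k, lrun k (q0 S k) (proj k u) (c.1 k)) -> ST src dst S 0 (STpair u c).
Proof.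
move=> Hc Hst /reach1_sync_trace_c0 H.
have Ec : ([ffun k => c.1 k], c0.2) = c.
  case: c Hc Hst {H} => f ch Hc Hst; congr pair; apply/ffunP; [move=> k | case=> i j].
    by rewrite ffunE.
  by rewrite ffunE; case: (eqVneq i j) => [<-|/Hst ->] //; rewrite (reach_self_chan Hc).
rewrite Ec in H; have Hr := reach1_reach H.
exists (sync_trace u); rewrite sends_sync_trace.
by split; [split; [exists u | exists c] | split].
Qed.

(** * Cutting a peer out of an execution *)

Definition recvs (t : seq act) : seq Sigma := pmap (@recv_of Sigma) t.

Lemma recvs_cat (t1 t2 : seq act) : recvs (t1 ++ t2) = recvs t1 ++ recvs t2.
Proof. by rewrite /recvs pmap_cat. Qed.

Lemma recvs_rcons (t : seq act) x : recvs (rcons t x) = recvs t ++ recvs [:: x].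
Proof. by rewrite -cats1 recvs_cat. Qed.

Definition actor (e : act) : 'I_N := match e with Send a => src a | Recv a => dst a end.

Section Cut.
Variables (i td : 'I_N).
Hypothesis out_i : forall a, src a = i -> dst a = td.

(* x' is x where peer i stopped acting at some point: its incoming channels have not been
   consumed since then (extra prefix R), its outgoing ones miss what it sent since (S0). *)
Definition cut_rel (x x' : cfg) := [/\ forall k, k != i -> x'.1 k = x.1 k,
  forall a b, a != i -> b != i -> x'.2 (a, b) = x.2 (a, b),
  forall a, exists R, x'.2 (a, i) = R ++ x.2 (a, i) &
  forall b, exists S0, x.2 (i, b) = x'.2 (i, b) ++ S0].

Lemma cut_step_send x x' a x1 : cut_rel x x' -> step x (Send a) x1 ->
  exists2 x1', cut_rel x1 x1' &
    (if src a != i then step x' (Send a) x1' else x1' = x') /\ x1'.2 (i, td) = x'.2 (i, td).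
Proof.
case=> HR1 HR2 HR3 HR4 Hs; inversion Hs as [? ? q Hd|]; subst.
case: (eqVneq (src a) i) => Ha.
  exists x' => //; split=> [k Hk|a' b' Ha' Hb'|a'|b]; rewrite /= ffunE.
  - by rewrite Ha (negbTE Hk); apply: HR1.
  - by case: eqP => [[Ea _]|_]; [rewrite Ea Ha eqxx in Ha' | apply: HR2].
  - case: eqP => [[_ Ei]|_] //; by move: (src_neq_dst a); rewrite Ha Ei eqxx.
  - case: eqP => [[<- ->]|_]; last exact: HR4.
    by have [S0 ->] := HR4 (dst a); exists (rcons S0 a); rewrite rcons_cat.
set x1' : cfg := (upd_state x' (src a) q,
  upd_chan x' (src a, dst a) (rcons (x'.2 (src a, dst a)) a)).
exists x1'; last first.
  split; first by apply: step_send; rewrite HR1.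
  by rewrite /x1' /= ffunE; case: eqP => [[Ei _]|//]; rewrite Ei eqxx in Ha.
split=> [k Hk|a' b' Ha' Hb'|a'|b]; rewrite /x1' /= !ffunE.
- by case: eqP => // _; apply: HR1.
- by case: eqP => [[Ea Eb]|_]; [rewrite -Ea -Eb HR2 | apply: HR2].
- case: eqP => [[_ <-]|_]; last exact: HR3.
  by have [R ->] := HR3 (src a); exists R; rewrite rcons_cat.
- by case: eqP => [[Ei _]|_]; [rewrite Ei eqxx in Ha | apply: HR4].
Qed.

Lemma cut_step_recv x x' a x1 : cut_rel x x' -> step x (Recv a) x1 ->
  (src a = i -> x'.2 (i, td) != [::]) ->
  exists2 x1', cut_rel x1 x1' &
    (if dst a != i then step x' (Recv a) x1' else x1' = x') /\
    size (x'.2 (i, td)) = size (x1'.2 (i, td)) + (src a == i).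
Proof.
case=> HR1 HR2 HR3 HR4 Hs Hne; inversion Hs as [|? ? q w Hw Hd]; subst.
case: (eqVneq (dst a) i) => Ha.
  have Hsa : src a != i by rewrite -Ha src_neq_dst.
  rewrite (negbTE Hsa); exists x'; last by rewrite addn0.
  split=> [k Hk|a' b' Ha' Hb'|a'|b]; rewrite /= ffunE.
  - by rewrite Ha (negbTE Hk); apply: HR1.
  - by case: eqP => [[_ Eb]|_]; [rewrite Eb Ha eqxx in Hb' | apply: HR2].
  - case: eqP => [[Ea _]|_]; last exact: HR3.
    by have [R ->] := HR3 a'; exists (rcons R a); rewrite Ea -Ha Hw cat_rcons.
  - by case: eqP => [[Ei _]|_]; [rewrite Ei eqxx in Hsa | apply: HR4].
have [w' Hw' [S0 Ew]] : exists2 w', x'.2 (src a, dst a) = a :: w' & exists S0, w = w' ++ S0.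
  case: (eqVneq (src a) i) => Hsa; last by exists w; [rewrite HR2 | exists [::]; rewrite cats0].
  have [S0 HS0] := HR4 (dst a); move: HS0 (Hne Hsa); rewrite -Hsa Hw (out_i Hsa).
  by case: (x'.2 _) => [|b w'] //= [-> ->] _; exists w' => //; exists S0.
set x1' : cfg := (upd_state x' (dst a) q, upd_chan x' (src a, dst a) w').
exists x1'; last first.
  split; first by apply: step_recv Hw' _; rewrite HR1.
  rewrite /x1' /= ffunE; case: eqP => [[Ei Etd]|Hne'].
    by rewrite Ei Etd Hw' eqxx addn1.
  case: (eqVneq (src a) i) => [Hsa|_]; last by rewrite addn0.
  by rewrite -Hsa (out_i Hsa) in Hne'.
split=> [k Hk|a' b' Ha' Hb'|a'|b]; rewrite /x1' /= !ffunE.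
- by case: eqP => // _; apply: HR1.
- case: eqP => [[Ea Eb]|_]; last exact: HR2.
  by move: Hw'; rewrite -Ea -Eb HR2 // Ea Eb Hw => -[].
- by case: eqP => [[_ Ei]|_]; [rewrite Ei eqxx in Ha | apply: HR3].
- by case: eqP => [_|_]; [exists S0 | apply: HR4].
Qed.

Lemma cut_reach tt x x' y : reach x tt y -> cut_rel x x' ->
  count (fun a => src a == i) (recvs tt) <= size (x'.2 (i, td)) ->
  exists y', reach x' (filter (fun e => actor e != i) tt) y'.
Proof.
elim: tt x x' => [|e tt IH] x x' Hr HR Hc; first by exists x'; constructor.
inversion Hr as [|? x1 ? ? ? Hs Hr1]; subst; clear Hr; case: e Hs Hc => a Hs Hc /=.
  have [x1' HR1 [Hs' E]] := cut_step_send HR Hs.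
  rewrite -E in Hc; have [y' Hy'] := IH _ _ Hr1 HR1 Hc.
  by exists y'; case: ifP Hs' => _ Hs'; [apply: reach_cons Hs' Hy' | rewrite -Hs'].
have Hne : src a = i -> x'.2 (i, td) != [::].
  by move=> Hsa; rewrite -size_eq0 -lt0n; apply: leq_trans Hc; rewrite /= Hsa eqxx.
have [x1' HR1 [Hs' E]] := cut_step_recv HR Hs Hne.
have [y' Hy'] : exists y', reach x1' (filter (fun e => actor e != i) tt) y'.
  by apply: IH Hr1 HR1 _; move: Hc; rewrite /= E addnC => H; rewrite -(leq_add2r (src a == i)).
by exists y'; case: ifP Hs' => _ Hs'; [apply: reach_cons Hs' Hy' | rewrite -Hs'].
Qed.

End Cut.

Lemma sends_filter_actor k t :
  sends (filter (fun e => actor e != k) t) = filter (fun a => src a != k) (sends t).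
Proof. by elim: t => //= -[] a t IH; rewrite /sends /=; case: ifP; rewrite /= -/(sends _) IH. Qed.

Lemma split_send (P : pred Sigma) t R y w : filter P (sends t) = R ++ y :: w ->
  exists t1 t2, [/\ t = t1 ++ Send y :: t2, filter P (sends t1) = R & filter P (sends t2) = w].
Proof.
elim: t R => [|[] a t IH] R; first by case: R.
  rewrite /sends /= -!/(sends _); case: ifP => Pa; last first.
    by case/IH=> t1 [t2 [-> H1 H2]]; exists (Send a :: t1), t2; rewrite /sends /= Pa.
  case: R => [[<- <-]|b R [Eb /IH [t1 [t2 [-> H1 H2]]]]]; first by exists [::], t.
  by exists (Send a :: t1), t2; rewrite /sends /= -/(sends _) Pa H1 Eb.
by case/IH=> t1 [t2 [-> H1 H2]]; exists (Recv a :: t1), t2.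
Qed.

Lemma src_dst_neqF j a : src a == j -> (dst a == j) = false.
Proof. by move=> /eqP <-; rewrite eq_sym (negbTE (src_neq_dst a)). Qed.

(* Peer j's projection of the synchronous run u when j has performed only r receptions. *)
Fixpoint proj_upto (j : 'I_N) (r : nat) (u : seq Sigma) : seq act :=
  if u is a :: u' then
    if src a == j then Send a :: proj_upto j r u'
    else if dst a == j then
      (if r is r'.+1 then Recv a :: proj_upto j r' u' else proj_upto j 0 u')
    else proj_upto j r u'
  else [::].

Lemma proj_upto_cat j r u1 u2 : proj_upto j r (u1 ++ u2) =
  proj_upto j r u1 ++ proj_upto j (r - count (fun a => dst a == j) u1) u2.
Proof.
elim: u1 r => [|a u1 IH] r /=; first by rewrite subn0.
case: ifP => [/src_dst_neqF Hd|_]; first by rewrite Hd IH.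
by case: ifP => _; [case: r => [|r]; rewrite IH // add1n subSS | rewrite IH].
Qed.

Lemma proj_upto_full j r u : count (fun a => dst a == j) u <= r -> proj_upto j r u = proj j u.
Proof.
elim: u r => [|a u IH] r //=; rewrite proj_cons /proj_msg.
case: ifP => [/src_dst_neqF ->|_]; first by move=> /IH ->.
by case: ifP => _; [case: r => // r; rewrite add1n ltnS => /IH -> | move=> /IH ->].
Qed.

Lemma proj_upto0_filter j i u : i != j ->
  proj_upto j 0 (filter (fun a => src a != i) u) = proj_upto j 0 u.
Proof.
move=> Hij; elim: u => //= a u IH; case: (eqVneq (src a) i) => [Ha|_] /=; last by rewrite IH.
by rewrite Ha (negbTE Hij); case: ifP.
Qed.

Section Ring.
Hypothesis ring : oriented_ring src dst.

Lemma ring_src_dst a b : (src a == src b) = (dst a == dst b).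
Proof.
have val_dst m : val (dst m) = (val (src m) + 1) %% N by apply/(ring (src m) (dst m)).1; exists m.
apply/eqP/eqP => E; apply: val_inj; first by rewrite !val_dst E.
move: (congr1 val E); rewrite !val_dst => /eqP.
by rewrite eqn_modDr !modn_small ?ltn_ord // => /eqP.
Qed.

Lemma on_chan_ring m : on_chan src dst (src m) (dst m) =1 (fun a => dst a == dst m).
Proof. by move=> a; rewrite /on_chan ring_src_dst andbb. Qed.

Definition nrecv (j : 'I_N) (t : seq act) := count (fun a => dst a == j) (recvs t).

Lemma ring_chan_reach t c m : reach c0 t c ->
  filter (fun a => dst a == dst m) (sends t) =
  filter (fun a => dst a == dst m) (recvs t) ++ c.2 (src m, dst m).
Proof.
by move/sent_on_reach/(_ (src m) (dst m)); rewrite /sent_on /recv_on !(eq_filter (on_chan_ring m)).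
Qed.

Lemma count_sends_reach t c m : reach c0 t c ->
  count (fun a => dst a == dst m) (sends t) = nrecv (dst m) t + size (c.2 (src m, dst m)).
Proof. by move/(ring_chan_reach m)/(congr1 size); rewrite size_cat !size_filter. Qed.

Lemma nrecv_le_reach t c j : reach c0 t c -> nrecv j t <= count (fun a => dst a == j) (sends t).
Proof.
move=> H; case: (pickP (fun m => dst m == j)) => [m /eqP <-|Hn].
  by rewrite (count_sends_reach _ H) leq_addr.
by rewrite /nrecv !(eq_count Hn) !count_pred0.
Qed.

Lemma nrecv_stable t c j : reach c0 t c -> stable c ->
  count (fun a => dst a == j) (sends t) <= nrecv j t.
Proof.
move=> H Hst; case: (pickP (fun m => dst m == j)) => [m /eqP <-|Hn].
  by rewrite (count_sends_reach _ H) (Hst _ _ (src_neq_dst m)) addn0.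
by rewrite /nrecv !(eq_count Hn) !count_pred0.
Qed.

Lemma reach_cut t1 d t2 c : reach c0 (t1 ++ Send d :: t2) c ->
  nrecv (dst d) (t1 ++ Send d :: t2) <= count (fun a => dst a == dst d) (sends t1) ->
  exists c', reach c0 (t1 ++ filter (fun e => actor e != src d) t2) c'.
Proof.
case/reach_cat=> c1 H1 H2; rewrite (count_sends_reach _ H1) /nrecv recvs_cat count_cat leq_add2l.
rewrite -(eq_count (ring_src_dst^~ d)) => Hcnt.
have out_d a : src a = src d -> dst a = dst d by move/eqP; rewrite ring_src_dst => /eqP.
have HR : cut_rel (src d) c1 c1 by split=> // [a|b]; [exists [::] | exists [::]; rewrite cats0].
have [c' Hc'] := cut_reach out_d H2 HR Hcnt.
by exists c'; apply/reach_cat; exists c1; rewrite //= eqxx in Hc'.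
Qed.

(** * Reachable executions of 1-synchronizable systems *)

Definition sync_invariant (t : seq act) (c : cfg) :=
  sync_feasible (sends t) /\
  forall j, lrun j (q0 S j) (proj_upto j (nrecv j t) (sends t)) (c.1 j).

Lemma sync_invariant_nil : sync_invariant [::] c0.
Proof. by split=> k; [exists (q0 S k) | rewrite ffunE]; constructor. Qed.

Section OneSynchronizable.
Hypothesis one_sync : forall o, ST src dst S 1 o -> ST src dst S 0 o.

Lemma reach1_sync_feasible t c : reach1 c0 t c -> sync_feasible (sends t).
Proof. by move=> H; apply/ST0_seqP/one_sync; exists t; split=> //; apply: reach1_T1 H. Qed.

Lemma sync_feasible_rcons u a qa qb : sync_feasible u ->
  lrun (src a) (q0 S (src a)) (proj (src a) u) qa -> delta S (src a) qa (Send a) qb ->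
  sync_feasible (rcons u a).
Proof.
move=> /fin_all_exists [h Hh] Hqa Hd.
pose x : cfg := ([ffun k => if k == src a then qa else h k], c0.2).
have Hx : reach1 c0 (sync_trace u) x by apply: reach1_sync_trace_c0 => k; case: eqP => [->|].
have Hd' : delta S (src a) (x.1 (src a)) (Send a) qb by rewrite ffunE eqxx.
have := reach1_sync_feasible (reach1_rcons_send Hx (step_send dst Hd') (ffunE _ _)).
by rewrite sends_rcons sends_sync_trace cats1.
Qed.

Lemma sync_feasible_rcons_pending v1 d v2 a qb : sync_feasible (v1 ++ d :: v2) ->
  (forall m, m \in v2 -> dst m != dst d) -> dst d = src a ->
  lrun (src a) (q0 S (src a)) (proj (src a) (v1 ++ v2 ++ [:: a])) qb ->
  sync_feasible (v1 ++ d :: v2 ++ [:: a]).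
Proof.
move=> /fin_all_exists [h Hh] Hv2 Hda.
rewrite catA proj_cat proj_cons proj_msg_src => /lrun_cat [q Hq /lrun_consE [qb' Hd /lrun_nilE Eq]].
subst qb'; rewrite -Hda in Hq; have Hx := reach1_pending Hh Hv2 Hq.
have Hd' : delta S (src a) ((pending_cfg d q h).1 (src a)) (Send a) qb.
  by rewrite ffunE Hda eqxx.
have Hempty : (pending_cfg d q h).2 (src a, dst a) = [::].
  rewrite ffunE -Hda; case: eqP => // -[E _].
  by move: (src_neq_dst d); rewrite E eqxx.
have := reach1_sync_feasible (reach1_rcons_send Hx (step_send dst Hd') Hempty).
by rewrite sends_rcons sends_cat /= sends_sync_trace -/(sends _) sends_sync_trace -catA.
Qed.

Lemma lrun_recv_pending w0 y w1 qa qb : sync_feasible (w0 ++ y :: w1) ->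
  (forall m, m \in w1 -> dst m != dst y) ->
  lrun (dst y) (q0 S (dst y)) (proj (dst y) (w0 ++ w1)) qa -> delta S (dst y) qa (Recv y) qb ->
  lrun (dst y) (q0 S (dst y)) (proj (dst y) (w0 ++ y :: w1)) qb.
Proof.
move=> /fin_all_exists [h Hh] Hw1 Hqa Hd; have Hx := reach1_pending Hh Hw1 Hqa.
set x := pending_cfg y qa h in Hx.
have Hs : step x (Recv y) (upd_state x (dst y) qb, upd_chan x (src y, dst y) [::]).
  by apply: step_recv; rewrite ffunE eqxx.
have Hr := reach1_rcons_recv Hx Hs.
have Hst : stable (upd_state x (dst y) qb, upd_chan x (src y, dst y) [::]).
  by move=> i j _; rewrite /= !ffunE; case: eqP => // _; case: eqP.
have HST : ST src dst S 1 (STpair (w0 ++ y :: w1) (upd_state x (dst y) qb,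
    upd_chan x (src y, dst y) [::])).
  exists (rcons (sync_trace w0 ++ Send y :: sync_trace w1) (Recv y)).
  split; first exact: reach1_T1 Hr.
  rewrite sends_rcons sends_cat /= sends_sync_trace -/(sends _) sends_sync_trace cats0.
  by split=> //; split=> //; apply: reach1_reach Hr.
by have := ST0_pair_lrun (one_sync HST) (dst y); rewrite /= ffunE eqxx.
Qed.

Section InductionStep.
Variable n : nat.
Hypothesis feasible_short : forall t c, size t < n -> reach c0 t c -> sync_feasible (sends t).

Lemma sync_feasible_cut t1 d t2 c : size (t1 ++ Send d :: t2) <= n ->
  reach c0 (t1 ++ Send d :: t2) c ->
  nrecv (dst d) (t1 ++ Send d :: t2) <= count (fun a => dst a == dst d) (sends t1) ->
  sync_feasible (sends t1 ++ filter (fun a => src a != src d) (sends t2)).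
Proof.
move=> Hsz Hr /(reach_cut Hr) [c' Hc']; rewrite -sends_filter_actor -sends_cat.
apply: feasible_short Hc'; apply: leq_trans Hsz; rewrite !size_cat /= addnS ltnS leq_add2l.
by rewrite size_filter count_size.
Qed.

Lemma sync_feasible_send_pending t1 d t2 a c :
  size (t1 ++ Send d :: t2) < n -> reach c0 (rcons (t1 ++ Send d :: t2) (Send a)) c ->
  sync_feasible (sends (t1 ++ Send d :: t2)) -> dst d = src a ->
  filter (fun m => dst m == src a) (sends t2) = [::] ->
  nrecv (src a) (t1 ++ Send d :: t2) <= count (fun m => dst m == src a) (sends t1) ->
  sync_feasible (rcons (sends (t1 ++ Send d :: t2)) a).
Proof.
move=> Hsz Hr HL Hda Ht2 Hcnt.
have /hasPn Hv2 : ~~ has (fun m => dst m == dst d) (sends t2) by rewrite has_filter Hda Ht2.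
have Hda' : src a != src d by rewrite -Hda eq_sym src_neq_dst.
rewrite rcons_cat rcons_cons in Hr.
have Hsz' : size (t1 ++ Send d :: rcons t2 (Send a)) <= n.
  by rewrite -rcons_cons -rcons_cat size_rcons.
have Hcnt' : nrecv (dst d) (t1 ++ Send d :: rcons t2 (Send a)) <=
    count (fun m => dst m == dst d) (sends t1).
  by rewrite -rcons_cons -rcons_cat /nrecv recvs_rcons cats0 Hda.
have := sync_feasible_cut Hsz' Hr Hcnt'.
rewrite sends_rcons /= cats1 (all_filterP _); last first.
  by rewrite all_rcons Hda' /=; apply/allP => m /Hv2; rewrite ring_src_dst.
move=> /(_ (src a)) [q]; rewrite -cats1 => Hq.
move: HL; rewrite sends_cat rcons_cat rcons_cons -cats1 => HL.
exact: sync_feasible_rcons_pending HL Hv2 Hda Hq.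
Qed.

Lemma sync_feasible_send t c a q : size t < n -> reach c0 t c -> sync_invariant t c ->
  delta S (src a) (c.1 (src a)) (Send a) q -> sync_feasible (rcons (sends t) a).
Proof.
move=> Hsz Hr [HL Hrun] Hd.
have [Hidle|Hpend] := leqP (count (fun m => dst m == src a) (sends t)) (nrecv (src a) t).
  by apply: sync_feasible_rcons HL _ Hd; rewrite -(proj_upto_full Hidle).
have [R [d E]] : exists R d, filter (fun m => dst m == src a) (sends t) = rcons R d.
  have : 0 < size (filter (fun m => dst m == src a) (sends t)).
    by rewrite size_filter (leq_ltn_trans _ Hpend).
  by case/lastP: (filter _ _) => // R d _; exists R, d.
have Hda : dst d = src a.
  have : d \in filter (fun m => dst m == src a) (sends t) by rewrite E mem_rcons mem_head.
  by rewrite mem_filter => /andP [/eqP].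
move: (E); rewrite -cats1 => /split_send [t1 [t2 [Et H1 H2]]]; subst t.
apply: sync_feasible_send_pending Hsz _ HL Hda H2 _.
  by apply/reach_rcons; exists c => //; apply: step_send Hd.
by move: Hpend; rewrite -size_filter E size_rcons ltnS -H1 size_filter.
Qed.

Lemma exists_recv_free_suffix ta y tb c :
  size (ta ++ Send y :: tb) < n -> reach c0 (rcons (ta ++ Send y :: tb) (Recv y)) c ->
  sync_feasible (sends (ta ++ Send y :: tb)) ->
  count (fun m => dst m == dst y) (sends ta) = nrecv (dst y) (ta ++ Send y :: tb) ->
  exists w1, [/\ sync_feasible (sends ta ++ y :: w1), {in w1, forall m, dst m != dst y}
               & proj (dst y) w1 = proj_upto (dst y) 0 (sends tb)].
Proof.
move=> Hsz Hr HL Hcnt.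
case E: (filter (fun m => dst m == dst y) (sends tb)) => [|d w].
  exists (sends tb); split; first by move: HL; rewrite sends_cat.
    by apply/hasPn; rewrite has_filter E.
  by rewrite proj_upto_full // -size_filter E.
(* d, the message behind y in its channel, is never received: cut its sender out from d on. *)
have [tb1 [tb2 [Etb H1 _]]] := split_send (R := [::]) E.
have Hdy : src d = src y.
  have : d \in filter (fun m => dst m == dst y) (sends tb) by rewrite E mem_head.
  by rewrite mem_filter -ring_src_dst => /andP [/eqP].
have Hdd : dst d = dst y by apply/eqP; rewrite -ring_src_dst Hdy.
have Et : (ta ++ Send y :: tb1) ++ Send d :: rcons tb2 (Recv y) =
    rcons (ta ++ Send y :: tb) (Recv y).
  by rewrite -catA /= -rcons_cons -rcons_cat -Etb -rcons_cons -rcons_cat.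
have Hcnt' : nrecv (dst d) ((ta ++ Send y :: tb1) ++ Send d :: rcons tb2 (Recv y)) <=
    count (fun m => dst m == dst d) (sends (ta ++ Send y :: tb1)).
  rewrite Et /nrecv recvs_rcons count_cat -/(nrecv _ _) Hdd -Hcnt sends_cat count_cat /=.
  by rewrite !leq_add2l.
have Hsz' : size ((ta ++ Send y :: tb1) ++ Send d :: rcons tb2 (Recv y)) <= n.
  by rewrite Et size_rcons.
rewrite -Et in Hr; have := sync_feasible_cut Hsz' Hr Hcnt'.
rewrite !sends_cat sends_rcons /= cats0 -catA Hdy => HL'.
exists (sends tb1 ++ filter (fun m => src m != src y) (sends tb2)); split=> //.
  have /hasPn Htb1 : ~~ has (fun m => dst m == dst y) (sends tb1) by rewrite has_filter H1.
  by move=> m; rewrite mem_cat mem_filter ring_src_dst => /orP [/Htb1|/andP []].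
rewrite Etb sends_cat /= proj_upto_cat sub0n /= Hdy (negbTE (src_neq_dst y)) Hdd eqxx.
rewrite proj_cat -[proj_upto _ 0 (sends tb2)](proj_upto0_filter _ (src_neq_dst y)).
rewrite !proj_upto_full //; last by rewrite -size_filter H1.
rewrite count_filter (eq_count (a2 := pred0)) ?count_pred0 // => m.
by rewrite /= ring_src_dst andbN.
Qed.

Lemma lrun_recv t c y w q : size t < n -> reach c0 t c -> sync_invariant t c ->
  c.2 (src y, dst y) = y :: w -> delta S (dst y) (c.1 (dst y)) (Recv y) q ->
  lrun (dst y) (q0 S (dst y)) (proj_upto (dst y) (nrecv (dst y) t).+1 (sends t)) q.
Proof.
move=> Hsz Hr [HL Hrun] Hw Hd.
have Hr' : reach c0 (rcons t (Recv y)) (upd_state c (dst y) q, upd_chan c (src y, dst y) w).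
  by apply/reach_rcons; exists c => //; apply: step_recv Hw Hd.
have := ring_chan_reach y Hr; rewrite Hw => /split_send [ta [tb [Et Hta _]]]; subst t.
have Hcnt : count (fun m => dst m == dst y) (sends ta) = nrecv (dst y) (ta ++ Send y :: tb).
  by rewrite -size_filter Hta size_filter.
have Hupto k :
    proj_upto (dst y) (nrecv (dst y) (ta ++ Send y :: tb) + k) (sends (ta ++ Send y :: tb))
    = proj (dst y) (sends ta) ++ proj_upto (dst y) k (y :: sends tb).
  by rewrite sends_cat proj_upto_cat -Hcnt addKn proj_upto_full // leq_addr.
have [w1 [HL1 Hw1 Hp]] := exists_recv_free_suffix Hsz Hr' HL Hcnt.
have Hrun_y := Hrun (dst y).
rewrite -[nrecv _ _]addn0 Hupto /= (negbTE (src_neq_dst y)) eqxx -Hp -proj_cat in Hrun_y.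
have := lrun_recv_pending HL1 Hw1 Hrun_y Hd.
by rewrite -addn1 Hupto proj_cat proj_cons proj_msg_dst /= (negbTE (src_neq_dst y)) eqxx Hp.
Qed.

Lemma sync_invariant_step t c x c' : size t < n -> reach c0 t c -> sync_invariant t c ->
  step c x c' -> sync_invariant (rcons t x) c'.
Proof.
move=> Hsz Hr Hinv Hs; have [HL Hrun] := Hinv.
rewrite /sync_invariant /nrecv sends_rcons recvs_rcons.
inversion Hs as [? a q Hd|? y q w Hw Hd]; subst => /=; rewrite cats0.
  split; first by rewrite cats1; apply: sync_feasible_send Hsz Hr Hinv Hd.
  move=> j; rewrite proj_upto_cat -/(nrecv j t).
  have /eqP -> : nrecv j t - count (fun m => dst m == j) (sends t) == 0.
    by rewrite subn_eq0 (nrecv_le_reach _ Hr).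
  rewrite /= ffunE [src a == j]eq_sym; case: eqP => [->|_]; last by rewrite if_same cats0.
  by apply/lrun_cat; exists (c.1 (src a)) => //; apply: lrun_cons Hd (lrun_nil _ _).
split=> // j; rewrite count_cat -/(nrecv j t) /= ffunE [dst y == j]eq_sym.
case: eqP => [->|_]; last by rewrite !addn0.
by rewrite addn0 addn1; apply: lrun_recv Hsz Hr Hinv Hw Hd.
Qed.

End InductionStep.

Lemma reach_sync_invariant t c : reach c0 t c -> sync_invariant t c.
Proof.
have [n] := ubnP (size t); elim: n t c => // n IH.
case/lastP => [|t x] c Hsz Hr; first by inversion Hr; apply: sync_invariant_nil.
have /reach_rcons [c1 Hr1 Hs] := Hr; rewrite size_rcons ltnS in Hsz.
have feasible_short t' c' Ht' Hr' := (IH t' c' Ht' Hr').1.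
exact: (sync_invariant_step feasible_short Hsz Hr1 (IH _ _ Hsz Hr1) Hs).
Qed.

Lemma ST_omega_ST0 o : ST_omega src dst S o -> ST src dst S 0 o.
Proof.
case: o => [u|u c] [t].
  by case=> -[k [_ [c Hr]]] <-; apply/ST0_seqP; case: (reach_sync_invariant Hr).
case=> -[k _] [<- [Hr Hst]]; apply: (lrun_ST0_pair Hr Hst) => j.
by case: (reach_sync_invariant Hr) => _ /(_ j); rewrite proj_upto_full // (nrecv_stable _ Hr Hst).
Qed.

End OneSynchronizable.

End Ring.

End Executions.

Theorem theorem4p15 (Sigma : finType) (N : nat) (src dst : Sigma -> 'I_N)
  (HN : 0 < N) (Hsd : forall a : Sigma, src a != dst a)
  (Hring : oriented_ring src dst)
  (Q : finType) (S : system Sigma N Q) :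
  one_synchronizable src dst S <-> synchronizable src dst S.
Proof.
have ST0_omega o : ST src dst S 0 o -> ST_omega src dst S o.
  by apply: ST_of_mono => t Ht; exists 0.
have ST0_ST1 o : ST src dst S 0 o -> ST src dst S 1 o by apply: ST_of_mono => t; apply: T0_T1.
have ST1_omega o : ST src dst S 1 o -> ST_omega src dst S o.
  by apply: ST_of_mono => t Ht; exists 1.
split=> H o; split=> [|Ho]; [exact: ST0_omega | | exact: ST0_ST1 | ].
  exact: (ST_omega_ST0 Hsd Hring (fun o' => (H o').2)).
by apply/(H o); apply: ST1_omega.
Qed.
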